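(* There is $N_0$ such that for all integers $N\ge N_0$ the following holds. Let $r,d$ be positive integers with $\gcd(d,r)=1$, let $\Pi=r(r+d)\cdots(r+(N-1)d)$, and perform the following elimination process: for every prime factor $p$ of $\Pi$, remove one term $r+id$ ($0\le i\le N-1$) for which $\mathrm{ord}_p(r+id)$ is maximal among all terms $r+jd$, $0\le j\le N-1$ (ties resolved arbitrarily; each term is removed at most once). Let $M$ be the total number of removed terms. Then either both $d<N^2$ and $r<N^2$, or $M>N/2$.
   Context: For a prime $p$ and a nonzero integer $m$, $\mathrm{ord}_p(m)$ denotes the largest integer $e$ with $p^e\mid m$. *)

From mathcomp Require Import all_boot.
Set Implicit Arguments. Unset Strict Implicit. Unset Printing Implicit Defensive.

Definition ap_term (r d i : nat) : nat := r + i * d.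

Definition ap_prod (r d N : nat) : nat := \prod_(i < N) ap_term r d i.

Definition valid_elimination (r d N : nat) (f : nat -> nat) : Prop :=
  forall p, prime p -> p %| ap_prod r d N ->
    f p < N /\ forall j, j < N -> logn p (ap_term r d j) <= logn p (ap_term r d (f p)).

(* Number of removed terms: the number of distinct indices chosen
   (each term is removed at most once). *)
Definition removed_count (r d N : nat) (f : nat -> nat) : nat :=
  size (undup [seq f p | p <- primes (ap_prod r d N)]).

From mathcomp Require Import all_boot zify.
Set Implicit Arguments. Unset Strict Implicit. Unset Printing Implicit Defensive.

(* Let m = f p be the index removed for the prime p.  Every surviving term
   a_i satisfies ord_p a_i <= ord_p a_m, and p does not divide d, so
   p^(ord_p a_i) divides a_m - a_i = (m - i) d, hence divides |i - m|.  The
   product of the survivors therefore divides prod_(i <> m) |i - m|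
   = m! (N-1-m)!, a divisor of (N-1)!.  If r + d >= N^2, every term other than
   a_0 = r is at least N^2; with M <= N/2 there are at least N/2 survivors,
   whose product is then at least N^(N-2) > (N-1)!. *)

Lemma logn_prod p I (s : seq I) (P : pred I) (F : I -> nat) :
  (forall i, P i -> 0 < F i) ->
  logn p (\prod_(i <- s | P i) F i) = \sum_(i <- s | P i) logn p (F i).
Proof.
move=> F_gt0; elim: s => [|i s IHs]; first by rewrite !big_nil logn1.
rewrite !big_cons; case: ifP => // Pi.
by rewrite lognM ?F_gt0 ?IHs //; apply: prodn_cond_gt0.
Qed.

Lemma dvdn_logn m n : 0 < m -> 0 < n ->
  (forall p, prime p -> logn p m <= logn p n) -> m %| n.
Proof.
move=> m_gt0 n_gt0 le_mn; apply/(dvdn_partP _ m_gt0) => p.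
by rewrite mem_primes => /andP[p_pr _]; rewrite p_part pfactor_dvdn // le_mn.
Qed.

Lemma fact_leq_expn n : n`! <= n ^ n.-1.
Proof.
elim: n => [|[|n] IHn] //; rewrite factS expnS leq_mul2l /= (leq_trans IHn) //.
by case: n {IHn} => // n; rewrite leq_exp2r.
Qed.

Lemma prod_dist_fact m N : m < N ->
  \prod_(0 <= i < N | i != m) (i - m + (m - i)) = m`! * (N - m.+1)`!.
Proof.
move=> lt_mN; rewrite (@big_cat_nat _ _ _ m) //= ?(ltnW lt_mN) //.
rewrite [X in _ * X]big_ltn_cond // eqxx fact_prod (fact_prod (N - _)) !big_add1.
congr (_ * _); rewrite big_mkcond /=.
  rewrite big_nat_rev /= add0n; apply: eq_big_nat => i /andP[_ lt_im].
  by rewrite ifT; [lia | apply/eqP; lia].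
have -> : N - m.+1 = N.-1 - m by lia.
rewrite -{1}(add0n m) big_addn; apply: eq_big_nat => i /andP[_ lt_i].
by rewrite ifT; [lia | apply/eqP; lia].
Qed.

Lemma ap_term_dvd_prod r d N i : i < N -> ap_term r d i %| ap_prod r d N.
Proof. by move=> lt_iN; rewrite /ap_prod (bigD1 (Ordinal lt_iN)) ?dvdn_mulr. Qed.

Lemma prime_dvdn_ap_term_coprime r d p i : coprime d r -> prime p ->
  p %| ap_term r d i -> coprime p d.
Proof.
move=> co_dr p_pr p_dvd; rewrite prime_coprime //; apply/negP => p_d.
have p_r : p %| r by rewrite -(dvdn_addl _ (dvdn_mull i p_d)).
by have := coprime_dvdl p_d co_dr; rewrite prime_coprime ?p_r.
Qed.

Lemma pfactor_dvdn_ap_dist r d p e i m : coprime p d ->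
  p ^ e %| ap_term r d i -> p ^ e %| ap_term r d m -> p ^ e %| i - m + (m - i).
Proof.
move=> co_pd; wlog le_im : i m / i <= m => [wlog|].
  by case: (leqP i m) => [|/ltnW] le dv_i dv_m; [|rewrite addnC]; apply: wlog.
have -> : ap_term r d m = ap_term r d i + (m - i) * d.
  by rewrite /ap_term -addnA -mulnDl subnKC.
move=> dv_i; rewrite dvdn_addr // Gauss_dvdl ?coprimeXl //.
by rewrite (eqP le_im).
Qed.

Lemma logn_ap_term_le_dist r d p i m : coprime d r -> prime p -> i != m ->
    logn p (ap_term r d i) <= logn p (ap_term r d m) ->
  logn p (ap_term r d i) <= logn p (i - m + (m - i)).
Proof.
move=> co_dr p_pr ne_im le_im.
have [->//|e_gt0] := posnP (logn p (ap_term r d i)).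
have [ai_gt0 p_ai] : 0 < ap_term r d i /\ p %| ap_term r d i.
  by move: e_gt0; rewrite logn_gt0 mem_primes => /and3P[].
have am_gt0 : 0 < ap_term r d m.
  by move: (leq_trans e_gt0 le_im); rewrite logn_gt0 mem_primes => /and3P[].
rewrite -pfactor_dvdn //; last by move: ne_im; rewrite neq_ltn => /orP[]; lia.
apply: pfactor_dvdn_ap_dist (prime_dvdn_ap_term_coprime co_dr p_pr p_ai) _ _.
  by rewrite pfactor_dvdn.
by rewrite pfactor_dvdn.
Qed.

Definition removed_indices r d N (f : nat -> nat) : seq nat :=
  [seq f p | p <- primes (ap_prod r d N)].

Definition survivors r d N (f : nat -> nat) : seq nat :=
  [seq i <- iota 0 N | i \notin removed_indices r d N f].

Lemma survivors_uniq r d N f : uniq (survivors r d N f).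
Proof. by rewrite filter_uniq ?iota_uniq. Qed.

Lemma leq_survivors_removed r d N f :
  N <= size (survivors r d N f) + removed_count r d N f.
Proof.
rewrite size_filter -{1}(size_iota 0 N) -(count_predC (mem (removed_indices r d N f))).
rewrite addnC leq_add2l -size_filter /removed_count uniq_leq_size ?filter_uniq ?iota_uniq //.
by move=> i; rewrite mem_filter mem_undup => /andP[].
Qed.

Lemma logn_prod_survivors_le r d N f p : 0 < r -> coprime d r ->
    valid_elimination r d N f -> prime p ->
  logn p (\prod_(i <- survivors r d N f) ap_term r d i) <= logn p (N.-1)`!.
Proof.
move=> r_gt0 co_dr valid_f p_pr.
have ap_gt0 i : 0 < ap_term r d i by rewrite /ap_term; lia.
rewrite big_filter logn_prod //.
have [p_Pi | p_nPi] := boolP (p %| ap_prod r d N); last first.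
  rewrite big1_seq // => i /andP[_]; rewrite mem_iota => /andP[_ lt_iN].
  apply: logn_coprime; rewrite prime_coprime //; apply: contra p_nPi => p_ai.
  exact: dvdn_trans p_ai (ap_term_dvd_prod r d lt_iN).
have [lt_fN max_f] := valid_f p p_pr p_Pi; set m := f p in lt_fN max_f *.
have m_removed : m \in removed_indices r d N f.
  by apply: map_f; rewrite mem_primes p_pr p_Pi prodn_gt0.
apply: (@leq_trans (\sum_(i <- iota 0 N | i != m) logn p (i - m + (m - i)))).
  rewrite big_mkcond [X in _ <= X]big_mkcond big_seq [X in _ <= X]big_seq.
  apply: leq_sum => i; rewrite mem_iota => /andP[_ lt_iN] /=.
  case: ifP => // i_surv; rewrite ifT; last by apply: contraNneq i_surv => ->.
  by apply: logn_ap_term_le_dist; rewrite ?max_f //; apply: contraNneq i_surv => ->.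
rewrite -logn_prod; last by move=> i ne_im; rewrite lt0n; apply: contraNneq ne_im; lia.
rewrite -{1}(subn0 N) prod_dist_fact //; apply: dvdn_leq_log; first exact: fact_gt0.
have -> : N - m.+1 = N.-1 - m by lia.
by rewrite -[X in _ %| X](@bin_fact N.-1 m); [apply: dvdn_mull | lia].
Qed.

Lemma prod_survivors_dvdn_fact r d N f : 0 < r -> coprime d r ->
    valid_elimination r d N f ->
  \prod_(i <- survivors r d N f) ap_term r d i %| (N.-1)`!.
Proof.
move=> r_gt0 co_dr valid_f; apply: dvdn_logn; last by move=> p; apply: logn_prod_survivors_le.
  by apply: prodn_gt0 => i; rewrite /ap_term; lia.
exact: fact_gt0.
Qed.

Lemma prod_ap_term_geq r d c (s : seq nat) : 0 < r -> 0 < c -> c <= r + d ->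
  uniq s -> c ^ (size s).-1 <= \prod_(i <- s) ap_term r d i.
Proof.
move=> r_gt0 c_gt0 le_c s_uniq.
apply: (@leq_trans (\prod_(i <- s) (if i != 0 then c else 1))).
  rewrite -big_mkcond big_const_seq iter_muln_1 leq_pexp2l //.
  have := count_predC (pred1 0) s; rewrite count_uniq_mem //.
  by case: (0 \in s) => <- /=; rewrite ?add1n ?add0n ?leq_pred.
apply: leq_prod => i _; rewrite /ap_term; case: eqP => [->|/eqP i_neq0] /=.
  by rewrite mul0n addn0.
by apply: leq_trans le_c _; rewrite leq_add2l leq_pmull ?lt0n.
Qed.

Theorem corollary1 :
  exists N0 : nat, forall N : nat, N0 <= N ->
    forall r d : nat, 0 < r -> 0 < d -> coprime d r ->
    forall f : nat -> nat, valid_elimination r d N f ->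
      (d < N ^ 2 /\ r < N ^ 2) \/ N < 2 * removed_count r d N f.
Proof.
exists 3 => N le3N r d r_gt0 _ co_dr f valid_f.
have [|le_count] := ltnP N (2 * removed_count r d N f); [by right | left].
apply/andP; rewrite -[_ && _]negbK; apply/negP => large_rd.
have le_c : N ^ 2 <= r + d by move: large_rd; rewrite negb_and -!leqNgt => /orP[]; lia.
have ub := dvdn_leq (fact_gt0 _) (prod_survivors_dvdn_fact r_gt0 co_dr valid_f).
have N2_gt0 : 0 < N ^ 2 by rewrite expn_gt0; lia.
have lb := prod_ap_term_geq r_gt0 N2_gt0 le_c (survivors_uniq r d N f).
have le_exp : N ^ N.-2 <= (N ^ 2) ^ (size (survivors r d N f)).-1.
  rewrite -expnM; apply: leq_pexp2l; have := leq_survivors_removed r d N f; lia.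
have lt_fact : (N.-1)`! < N ^ N.-2.
  by apply: leq_ltn_trans (fact_leq_expn N.-1) _; rewrite ltn_exp2r; lia.
lia.
Qed.
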